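(* Let $q$ be a prime power, $\mathbb{F}$ an extension field of $\mathbb{F}_q$, $\ell\ge1$, and $C$ an $[n,k]_{\mathbb{F}}$ code with generator matrix $G\in\mathbb{F}^{k\times n}$. The following are equivalent: (1) $C$ is $\mathrm{MRD}(\ell)$; (2) $C$ is MRD and for all $\mathbb{F}_q$-subspaces $V_1,\dots,V_\ell\subseteq\mathbb{F}_q^n$, each of dimension at most $k$, one has $\bigcap_{i=1}^\ell G_{V_i}=0$ if and only if $\bigcap_{i=1}^\ell W_{V_i}=0$, where $W=(Z_{i,j})_{i\in[k],j\in[n]}$ is a matrix of independent variables over $\mathbb{F}(Z_{1,1},\dots,Z_{k,n})$.
   Context: $C$ is an $\mathbb{F}$-subspace of $\mathbb{F}^n$ of dimension $k$, $C=\{G^T\bm{u}\}$. $C$ is MRD if every nonzero codeword $\bm{v}$ satisfies $\dim_{\mathbb{F}_q}\mathrm{span}_{\mathbb{F}_q}\{v_1,\dots,v_n\}\ge n-k+1$. For an $\mathbb{F}_q$-subspace $V\subseteq\mathbb{F}_q^n$ and a matrix $H$ with $n$ columns, $H_V$ is the column span (over the field of entries of $H$) of $HA$ for any $A\in\mathbb{F}_q^{n\times\dim V}$ whose $\mathbb{F}_q$-column span is $V$. $C$ is $\mathrm{MRD}(\ell)$ if for all $\mathbb{F}_q$-subspaces $V_1,\dots,V_\ell\subseteq\mathbb{F}_q^n$ of dimension at most $k$, $\dim(\bigcap_i G_{V_i})=\dim(\bigcap_i W_{V_i})$, with $W$ taken over $\mathbb{F}_q(Z_{1,1},\dots,Z_{k,n})$.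 *)

From HB Require Import structures.
From mathcomp Require Import all_boot all_order all_algebra.
From mathcomp Require Import mpoly.
Set Implicit Arguments. Unset Strict Implicit. Unset Printing Implicit Defensive.
Import Order.TTheory GRing.Theory Num.Theory.
Local Open Scope ring_scope.

(* Setting: K = F_q is a finite field, F is an extension field of K given by
   the (necessarily injective) ring morphism phi : K -> F. *)

Definition Fq_indep (K : finFieldType) (F : fieldType) (phi : {rmorphism K -> F})
  (n : nat) (v : 'rV[F]_n) (S : {set 'I_n}) : bool :=
  [forall a : {ffun 'I_n -> K},
    (\sum_(j in S) phi (a j) * v 0 j == 0) ==> [forall j in S, a j == 0]].

(* dim_{F_q} span_{F_q} {v_1, ..., v_n}: the maximal size of an F_q-linearly
   independent subfamily of the generators v_1, ..., v_n. *)
Definition Fq_rank (K : finFieldType) (F : fieldType) (phi : {rmorphism K -> F})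
  (n : nat) (v : 'rV[F]_n) : nat :=
  \max_(S : {set 'I_n} | Fq_indep phi v S) #|S|.

(* C = { G^T u } is MRD: every nonzero codeword v = G^T u (written as the row
   vector u *m G) has F_q-rank at least n - k + 1. *)
Definition MRD (K : finFieldType) (F : fieldType) (phi : {rmorphism K -> F})
  (k n : nat) (G : 'M[F]_(k, n)) : Prop :=
  forall u : 'rV[F]_k, u *m G != 0 -> (n - k + 1 <= Fq_rank phi (u *m G))%N.

(* An F_q-subspace V of F_q^n is represented as the row space of a matrix
   V : 'M[K]_n.  A := (row_base V)^T is an n x dim V matrix over F_q whose
   column span is V.  H_V, the column span of H A (over the field L of entries
   of H, K embedded in L by psi), is represented as the row space of
   (H A)^T = A^T H^T, a subspace of 'rV[L]_k. *)
Definition subV (K : finFieldType) (L : fieldType) (psi : K -> L)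
  (k n : nat) (H : 'M[L]_(k, n)) (V : 'M[K]_n) : 'M[L]_(\rank V, k) :=
  map_mx psi (row_base V) *m H^T.

Definition capV (K : finFieldType) (L : fieldType) (psi : K -> L)
  (k n l : nat) (H : 'M[L]_(k, n)) (V : 'I_l -> 'M[K]_n) : 'M[L]_k :=
  (\bigcap_(i < l) <<subV psi H (V i)>>)%MS.

Definition ratfun (R : idomainType) (k n : nat) :=
  {fraction {mpoly R[k * n]}}.

Definition Wmat (R : idomainType) (k n : nat) : 'M[ratfun R k n]_(k, n) :=
  \matrix_(i < k, j < n) (tofrac ('X_(mxvec_index i j) : {mpoly R[k * n]})).

Definition embZ (K : finFieldType) (R : idomainType) (psi : K -> R) (k n : nat)
  (a : K) : ratfun R k n :=
  tofrac (psi a)%:MP.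

Definition MRDl (K : finFieldType) (F : fieldType) (phi : {rmorphism K -> F})
  (l k n : nat) (G : 'M[F]_(k, n)) : Prop :=
  forall V : 'I_l -> 'M[K]_n, (forall i, (\rank (V i) <= k)%N) ->
    \rank (capV phi G V) = \rank (capV (@embZ K K id k n) (Wmat K k n) V).

From HB Require Import structures.
From mathcomp Require Import all_boot all_order all_algebra.
From mathcomp Require Import mpoly.
From mathcomp Require Import zify.
Set Implicit Arguments. Unset Strict Implicit. Unset Printing Implicit Defensive.
Import Order.TTheory GRing.Theory Num.Theory.
Local Open Scope ring_scope.

(* A code is MRD exactly when dim G_V = dim V for every F_q-subspace V of
   dimension at most k: a nonzero codeword u G of F_q-rank at most n - k has a
   k-dimensional space V of F_q-relations among its entries, and then u is
   orthogonal to G_V. The generic matrix W has this property, since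
   specialising Z turns the relevant k x k minor into 1.

   For two matrices with this property whose l-fold intersections vanish
   simultaneously, the dimensions of the intersections agree. By induction on
   dim V_1: if the first intersection is nonzero, pick a hyperplane A of V_1
   avoiding one of its vectors, so that it loses exactly one dimension when
   V_1 is replaced by A; the second one loses at most one, whence
   dim (second) <= dim (first), and equality by symmetry.

   Finally phi extends to a field morphism F_q(Z) -> F(Z) fixing the Z_ij,
   which preserves the dimensions of the intersections for W. *)

Section RankCodim.
Variable L : fieldType.

Lemma mxrank_mul_codim m p n q (A : 'M[L]_(m, n)) (A' : 'M[L]_(p, n)) (M : 'M[L]_(n, q)) :
  (A' <= A)%MS -> (\rank (A *m M) <= \rank (A' *m M) + (\rank A - \rank A'))%N.
Proof.
move=> sA'A; have kerA := mxrank_mul_ker A M; have kerA' := mxrank_mul_ker A' M.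
have : (\rank (A' :&: kermx M)%MS <= \rank (A :&: kermx M)%MS)%N by rewrite mxrankS ?capmxS.
lia.
Qed.

Lemma mxrank_cap_codim m p q n (A : 'M[L]_(m, n)) (A' : 'M[L]_(p, n)) (U : 'M[L]_(q, n)) :
  (A' <= A)%MS -> (\rank (A :&: U)%MS <= \rank (A' :&: U)%MS + (\rank A - \rank A'))%N.
Proof.
move=> sA'A; have := mxrank_sum_cap (A :&: U)%MS A'.
have : (\rank (A :&: U + A')%MS <= \rank A)%N by rewrite mxrankS // addsmx_sub capmxSl.
have : (\rank (A :&: U :&: A')%MS <= \rank (A' :&: U)%MS)%N.
  by rewrite mxrankS // sub_capmx capmxSr (submx_trans (capmxSl _ _) (capmxSr _ _)).
have : (\rank A' <= \rank A)%N by rewrite mxrankS.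
lia.
Qed.

Lemma mxrank_1_sub_delta d (j : 'I_d) :
  (\rank (1%:M - delta_mx j j : 'M[L]_d)).+1 = d.
Proof.
set D := 1%:M - delta_mx j j.
have rD1 : (d <= (\rank D).+1)%N.
  have := mxrank_add D (delta_mx j j).
  by rewrite subrK mxrank1 mxrank_delta addn1.
have rD2 : (\rank D < d)%N.
  have : kermx D != 0.
    apply/rowV0Pn; exists (delta_mx 0 j : 'rV_d).
      by apply/sub_kermxP; rewrite mulmxBr mulmx1 mul_delta_mx subrr.
    by apply/negP => /eqP/matrixP/(_ 0 j); rewrite !mxE !eqxx; exact/eqP/oner_neq0.
  by rewrite kermx_eq0 /row_free ltn_neqAle rank_leq_row andbT.
lia.
Qed.

Lemma exists_submx_rank m n r (A : 'M[L]_(m, n)) :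
  (r <= \rank A)%N -> exists2 X : 'M[L]_(r, n), (X <= A)%MS & \rank X = r.
Proof.
move=> rA; exists (pid_mx r *m row_base A).
  by rewrite (submx_trans (submxMl _ _)) ?eq_row_base.
by rewrite mxrankMfree ?row_base_free // rank_pid_mx.
Qed.

Lemma exists_supmx_rank m n r (A : 'M[L]_(m, n)) :
  (\rank A <= r <= n)%N -> exists2 B : 'M[L]_(r, n), (A <= B)%MS & \rank B = r.
Proof.
case/andP=> rA rn; exists (pid_mx r *m row_ebase A); last first.
  by rewrite mxrankMfree ?row_free_unit ?row_ebase_unit // rank_pid_mx.
rewrite -(eq_row_base A) /row_base.
have -> : pid_mx (\rank A) = pid_mx (\rank A) *m (pid_mx r : 'M_(r, n)) :> 'M[L]_(\rank A, n).
  by rewrite mul_pid_mx; congr pid_mx; lia.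
by rewrite -mulmxA submxMl.
Qed.

End RankCodim.

Lemma eqmx0_rank (L : fieldType) m n (A : 'M[L]_(m, n)) :
  (A == (0 : 'M_n))%MS = (\rank A == 0%N).
Proof. by rewrite mxrank_eq0 (sameP eqmx0P eqP). Qed.

Lemma map_bigcapmx_gen (L1 L2 : fieldType) (mu : {rmorphism L1 -> L2}) n
    (I : finType) (P : pred I) (m : I -> nat) (A : forall i, 'M[L1]_(m i, n)) :
  (map_mx mu (\bigcap_(i | P i) <<A i>>) :=: \bigcap_(i | P i) <<map_mx mu (A i)>>)%MS.
Proof.
apply/eqmxP; apply: (big_rec2 (fun X Y => map_mx mu X == Y)%MS) => [|i X Y _ /eqmxP eqXY].
  by rewrite map_mx1; apply/eqmxP.
by apply/eqmxP; apply: eqmx_trans (map_capmx mu _ _) _; apply: cap_eqmx => //; apply: map_genmx.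
Qed.

Section SpanV.
Variables (K L : fieldType) (f : {rmorphism K -> L}) (k n : nat) (H : 'M[L]_(k, n)).

(* The row space of [spanV f H A] is H_V for V the row space of A; unlike
   [subV], any spanning matrix A is allowed. *)
Definition spanV m (A : 'M[K]_(m, n)) : 'M[L]_(m, k) := map_mx f A *m H^T.

Definition spanV_faithful :=
  forall m (A : 'M[K]_(m, n)), (\rank A <= k)%N -> \rank (spanV A) = \rank A.

Lemma spanVS m p (A : 'M_(m, n)) (B : 'M_(p, n)) :
  (A <= B)%MS -> (spanV A <= spanV B)%MS.
Proof. by move=> sAB; rewrite submxMr // map_submx. Qed.

Lemma eqmx_spanV m p (A : 'M_(m, n)) (B : 'M_(p, n)) :
  (A :=: B)%MS -> (spanV A :=: spanV B)%MS.
Proof. by move=> eqAB; apply/eqmxMr/map_eqmx. Qed.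

Lemma spanV_mul m p (X : 'M_(m, p)) (B : 'M_(p, n)) :
  spanV (X *m B) = map_mx f X *m spanV B.
Proof. by rewrite /spanV map_mxM mulmxA. Qed.

Lemma mxrank_spanV_codim m p (A : 'M_(m, n)) (A' : 'M_(p, n)) :
  (A' <= A)%MS -> (\rank (spanV A) <= \rank (spanV A') + (\rank A - \rank A'))%N.
Proof.
by move=> sA'A; rewrite -(mxrank_map f A) -(mxrank_map f A') mxrank_mul_codim ?map_submx.
Qed.

Lemma spanV_faithful_full : (k <= n)%N ->
  (forall B : 'M[K]_(k, n), \rank B = k -> \rank (spanV B) = k) -> spanV_faithful.
Proof.
move=> le_kn fullH m A rAk.
have [B sAB rB] : exists2 B : 'M_(k, n), (A <= B)%MS & \rank B = k.
  by apply: exists_supmx_rank; rewrite rAk le_kn.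
have /submxP[X defA] : (row_base A <= B)%MS by rewrite eq_row_base.
have fB : row_free B by rewrite /row_free rB.
have fTB : row_free (spanV B) by rewrite /row_free fullH.
have rX : \rank X = \rank A by rewrite -(mxrankMfree _ fB) -defA eq_row_base.
by rewrite -(eqmx_spanV (eq_row_base A)) defA spanV_mul mxrankMfree // mxrank_map.
Qed.

Lemma spanV_avoid (A : 'M[K]_n) (x : 'rV[L]_k) :
  \rank (spanV A) = \rank A -> (x <= spanV A)%MS -> x != 0 ->
  exists A' : 'M[K]_n, [/\ (A' <= A)%MS, (\rank A').+1 = \rank A & ~~ (x <= spanV A')%MS].
Proof.
move=> rTA xT x_neq0; set B := row_base A.
have eTB : (spanV B :=: spanV A)%MS by apply/eqmx_spanV/eq_row_base.
have fTB : row_free (spanV B) by rewrite /row_free eTB rTA.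
have /submxP[y defx] : (x <= spanV B)%MS by rewrite eTB.
have [j yj_neq0] : exists j, y 0 j != 0.
  apply/existsP; apply: contraNT x_neq0 => /existsPn y0.
  rewrite defx (_ : y = 0) ?mul0mx //; apply/rowP => j; rewrite mxE; exact/eqP/negPn/y0.
set D : 'M[K]_(\rank A) := 1%:M - delta_mx j j.
exists <<D *m B>>%MS; split.
- by rewrite genmxE (submx_trans (submxMl _ _)) ?eq_row_base.
- by rewrite genmxE mxrankMfree ?row_base_free ?mxrank_1_sub_delta.
apply: contra yj_neq0; rewrite (eqmx_spanV (genmxE _)) spanV_mul defx.
case/submxP=> z; rewrite mulmxA => /(row_free_inj fTB) ->; rewrite mxE big1 // => r _.
by rewrite !mxE eqxx andbT subrr rmorph0 mulr0.
Qed.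

End SpanV.

Section CapV.
Variables (K : finFieldType) (k n l : nat).
Implicit Types (L : fieldType) (V : 'I_l -> 'M[K]_n).

Definition admissible V := forall i, (\rank (V i) <= k)%N.

Definition updV V (i0 : 'I_l) (A : 'M[K]_n) : 'I_l -> 'M[K]_n := [eta V with i0 |-> A].

Lemma capV_spanV L (f : {rmorphism K -> L}) (H : 'M[L]_(k, n)) V :
  capV f H V = (\bigcap_(i < l) <<spanV f H (V i)>>)%MS.
Proof. by apply: eq_bigr => i _; apply/eq_genmx/eqmx_spanV/eq_row_base. Qed.

Lemma capV_split L (f : {rmorphism K -> L}) (H : 'M[L]_(k, n)) V (i0 : 'I_l) :
  capV f H V = (<<spanV f H (V i0)>> :&: \bigcap_(i < l | i != i0) <<spanV f H (V i)>>)%MS.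
Proof. by rewrite capV_spanV (bigD1 i0). Qed.

Lemma capV_update L (f : {rmorphism K -> L}) (H : 'M[L]_(k, n)) V (i0 : 'I_l) A :
  capV f H (updV V i0 A) =
    (<<spanV f H A>> :&: \bigcap_(i < l | i != i0) <<spanV f H (V i)>>)%MS.
Proof.
rewrite (capV_split _ _ _ i0) /updV /= eqxx; congr (_ :&: _)%MS.
by apply: eq_bigr => i /negbTE ->.
Qed.

Lemma capV_const L (f : {rmorphism K -> L}) (H : 'M[L]_(k, n)) (A : 'M[K]_n) (i0 : 'I_l) :
  \rank (capV f H (fun _ : 'I_l => A)) = \rank (spanV f H A).
Proof.
rewrite (capV_split _ _ _ i0) (capmx_idPl _) ?genmxE //.
by apply/sub_bigcapmxP => i _; rewrite genmxE.
Qed.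

Lemma capV_drop L (f : {rmorphism K -> L}) (H : 'M[L]_(k, n)) V (i0 : 'I_l) :
  \rank (spanV f H (V i0)) = \rank (V i0) -> capV f H V != 0 ->
  exists A : 'M[K]_n, [/\ (A <= V i0)%MS, (\rank A).+1 = \rank (V i0) &
    (\rank (capV f H (updV V i0 A)) < \rank (capV f H V))%N].
Proof.
move=> rT /rowV0Pn[x xV x_neq0].
have xT : (x <= spanV f H (V i0))%MS.
  by move: xV; rewrite (capV_split _ _ _ i0) sub_capmx genmxE => /andP[].
have [A [sA rA xA]] := spanV_avoid rT xT x_neq0.
exists A; split=> //.
suff : (capV f H (updV V i0 A) < capV f H V)%MS by rewrite ltmxErank => /andP[].
have sAV : (<<spanV f H A>> <= <<spanV f H (V i0)>>)%MS by rewrite !genmxE spanVS.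
rewrite ltmxE capV_update (capV_split _ _ _ i0) capmxS //=; apply: contra xA => sVA.
move: xV; rewrite (capV_split _ _ _ i0) => /submx_trans/(_ sVA).
by rewrite sub_capmx genmxE => /andP[].
Qed.

Section RankFromVanishing.
Variables (L1 L2 : fieldType) (f1 : {rmorphism K -> L1}) (f2 : {rmorphism K -> L2}).
Variables (H1 : 'M[L1]_(k, n)) (H2 : 'M[L2]_(k, n)) (i0 : 'I_l).

Lemma capV_rank_le V : spanV_faithful f1 H1 ->
  (forall V', admissible V' ->
     (capV f1 H1 V' == (0 : 'M_k))%MS = (capV f2 H2 V' == (0 : 'M_k))%MS) ->
  (forall V', admissible V' -> (\rank (V' i0) < \rank (V i0))%N ->
     \rank (capV f1 H1 V') = \rank (capV f2 H2 V')) ->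
  admissible V -> (\rank (capV f2 H2 V) <= \rank (capV f1 H1 V))%N.
Proof.
move=> faith1 vanish IH rV.
have [cap1_0 | cap1_neq0] := eqVneq (capV f1 H1 V) 0.
  have /eqmx0P -> : (capV f2 H2 V == (0 : 'M_k))%MS by rewrite -vanish // cap1_0; apply/eqmx0P.
  by rewrite mxrank0.
have [A [sA rA lt1]] := capV_drop (faith1 _ _ (rV i0)) cap1_neq0.
have rVA : admissible (updV V i0 A).
  by move=> i; rewrite /updV /=; case: eqP => _ //; rewrite (leq_trans (mxrankS sA)).
have ltA : (\rank (updV V i0 A i0) < \rank (V i0))%N by rewrite /updV /= eqxx -rA.
have eqA := IH _ rVA ltA.
have sAV : (<<spanV f2 H2 A>> <= <<spanV f2 H2 (V i0)>>)%MS by rewrite !genmxE spanVS.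
have := mxrank_cap_codim (\bigcap_(i < l | i != i0) <<spanV f2 H2 (V i)>>)%MS sAV.
have := mxrank_spanV_codim f2 H2 sA.
rewrite -(capV_split f2 H2 V i0) -(capV_update f2 H2 V i0 A) !genmxE -rA -eqA.
lia.
Qed.

End RankFromVanishing.

Lemma capV_rank_eq L1 L2 (f1 : {rmorphism K -> L1}) (f2 : {rmorphism K -> L2})
    (H1 : 'M[L1]_(k, n)) (H2 : 'M[L2]_(k, n)) (i0 : 'I_l) :
  spanV_faithful f1 H1 -> spanV_faithful f2 H2 ->
  (forall V, admissible V ->
     (capV f1 H1 V == (0 : 'M_k))%MS = (capV f2 H2 V == (0 : 'M_k))%MS) ->
  forall V, admissible V -> \rank (capV f1 H1 V) = \rank (capV f2 H2 V).
Proof.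
move=> faith1 faith2 vanish V; have [m] := ubnP (\rank (V i0)).
elim: m => // m IHm in V *; move=> /ltnSE rVm rV.
have IH V' : admissible V' -> (\rank (V' i0) < \rank (V i0))%N ->
    \rank (capV f1 H1 V') = \rank (capV f2 H2 V').
  by move=> rV' lt; apply: IHm => //; apply: leq_trans lt rVm.
apply/eqP; rewrite eqn_leq (capV_rank_le faith1 vanish IH rV) andbT.
apply: (capV_rank_le (i0 := i0) faith2) => // [V' rV' | V' rV' lt].
  by rewrite vanish.
by rewrite IH.
Qed.

Lemma mxrank_capV_map L1 L2 (mu : {rmorphism L1 -> L2}) (f : {rmorphism K -> L1})
    (g : K -> L2) (H : 'M[L1]_(k, n)) V :
  g =1 mu \o f -> \rank (capV g (map_mx mu H) V) = \rank (capV f H V).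
Proof.
move=> eq_g; rewrite -(mxrank_map mu (capV f H V)) /capV.
rewrite (map_bigcapmx_gen mu xpredT (fun i => subV f H (V i))).
congr (\rank _); apply: eq_bigr => i _; congr <<_>>%MS.
by rewrite /subV map_mxM map_trmx -map_mx_comp (@eq_map_mx _ _ _ _ _ _ eq_g).
Qed.

End CapV.

Section FqRank.
Variables (K : finFieldType) (F : fieldType) (phi : {rmorphism K -> F}) (n : nat).
Implicit Types (v : 'rV[F]_n) (x : 'rV[K]_n) (S : {set 'I_n}).

Definition Fq_eval v x : F := \sum_j phi (x 0 j) * v 0 j.

Fact Fq_eval_is_linear v : linear_for (phi \; *%R) (Fq_eval v).
Proof.
move=> a x y; rewrite /= /Fq_eval mulr_sumr -big_split; apply: eq_bigr => j _.
by rewrite !mxE rmorphD rmorphM mulrDl mulrA.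
Qed.

HB.instance Definition _ v :=
  GRing.isLinear.Build K 'rV[K]_n F (phi \; *%R) (Fq_eval v) (Fq_eval_is_linear v).

Definition Fq_ker v : 'M[K]_n := (\sum_(x | Fq_eval v x == 0) <<x>>)%MS.

Lemma sub_Fq_ker v x : (x <= Fq_ker v)%MS = (Fq_eval v x == 0).
Proof.
apply/idP/idP => [|x0]; last by apply: (sumsmx_sup x) => //; rewrite genmxE.
case/sub_sumsmxP=> u ->; rewrite linear_sum big1 // => y /eqP y0.
have /sub_rVP[a ->] : (u y *m <<y>> <= y)%MS by rewrite (submx_trans (submxMl _ _)) ?genmxE.
by rewrite linearZ_LR /= y0 mulr0.
Qed.

Definition coord_mx S : 'M[K]_(#|S|, n) :=
  \matrix_(r < #|S|, j < n) (enum_val r == j)%:R.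

Lemma sub_coord_mxP S x : reflect (forall j, j \notin S -> x 0 j = 0) (x <= coord_mx S)%MS.
Proof.
have coord0 r j : j \notin S -> coord_mx S r j = 0.
  move=> jS; rewrite mxE (_ : _ == j = false) //.
  by apply: contraNF jS => /eqP <-; apply: enum_valP.
apply: (iffP idP) => [/submxP[w ->] j jS | suppS].
  by rewrite mxE big1 // => r _; rewrite coord0 ?mulr0.
apply/submxP; exists (\row_r x 0 (enum_val r)); apply/rowP => j; rewrite !mxE.
have [jS | jS] := boolP (j \in S); last by rewrite suppS // big1 // => r _; rewrite coord0 ?mulr0.
rewrite (bigD1 (enum_rank_in jS j)) //= !mxE (enum_rankK_in jS jS) eqxx mulr1 big1 ?addr0 //.
move=> r nr; rewrite !mxE; case: eqP => [eq_rj|]; last by rewrite mulr0.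
by move: eq_rj nr; rewrite -{1}(enum_rankK_in jS jS) => /enum_val_inj ->; rewrite eqxx.
Qed.

Lemma mxrank_coord_mx S : \rank (coord_mx S) = #|S|.
Proof.
apply/eqP; rewrite eqn_leq rank_leq_row -[X in (X <= _)%N](mxrank1 K #|S|).
rewrite (leq_trans _ (mxrankM_maxl _ (coord_mx S)^T)) //; apply/eq_leq; congr mxrank.
apply/matrixP => r r'; rewrite !mxE (bigD1 (enum_val r)) //= big1 => [|j /negbTE nj].
  by rewrite !mxE eqxx mul1r addr0 (inj_eq enum_val_inj) eq_sym.
by rewrite !mxE eq_sym nj mul0r.
Qed.

Lemma Fq_indepE v S : Fq_indep phi v S = ((coord_mx S :&: Fq_ker v)%MS == 0).
Proof.
pose restr (a : {ffun 'I_n -> K}) : 'rV[K]_n := \row_j (if j \in S then a j else 0).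
have restrS a : (restr a <= coord_mx S)%MS by apply/sub_coord_mxP => j /negbTE jS; rewrite mxE jS.
have eval_restr a : Fq_eval v (restr a) = \sum_(j in S) phi (a j) * v 0 j.
  rewrite [RHS]big_mkcond; apply: eq_bigr => j _; rewrite mxE.
  by case: ifP; rewrite ?rmorph0 ?mul0r.
apply/forallP/rowV0P => [indep x | cap0 a].
  rewrite sub_capmx => /andP[/sub_coord_mxP suppS].
  have -> : x = restr [ffun j => x 0 j].
    by apply/rowP => j; rewrite !mxE ffunE; case: ifPn => // /suppS.
  rewrite sub_Fq_ker eval_restr => ker_x.
  have /forall_inP a0 := implyP (indep _) ker_x.
  by apply/rowP => j; rewrite !mxE; case: ifP => // jS; apply/eqP/a0.
apply/implyP; rewrite -eval_restr -sub_Fq_ker => ker_a.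
have /rowP a0 : restr a = 0 by apply: cap0; rewrite sub_capmx restrS.
by apply/forall_inP => j jS; have := a0 j; rewrite !mxE jS => ->.
Qed.

Lemma coord_mx_delta S j : j \in S -> ((delta_mx 0 j : 'rV[K]_n) <= coord_mx S)%MS.
Proof.
move=> jS; apply/sub_coord_mxP => i iS; rewrite mxE (_ : i == j = false) ?andbF //.
by apply: contraNF iS => /eqP ->.
Qed.

Lemma Fq_indep0 v : Fq_indep phi v set0.
Proof.
rewrite Fq_indepE -mxrank_eq0 -leqn0 (leq_trans (mxrankS (capmxSl _ _))) //.
by rewrite mxrank_coord_mx cards0.
Qed.

Lemma Fq_indepU1 v S j : Fq_indep phi v S ->
  ~~ ((delta_mx 0 j : 'rV[K]_n) <= coord_mx S + Fq_ker v)%MS -> Fq_indep phi v (j |: S).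
Proof.
rewrite !Fq_indepE => /rowV0P capS0 ej_notin.
apply/rowV0P => x; rewrite sub_capmx => /andP[/sub_coord_mxP suppx x_ker].
have x'S : (x - x 0 j *: delta_mx 0 j <= coord_mx S)%MS.
  apply/sub_coord_mxP => i iS; rewrite !mxE.
  have [->|ij] := eqVneq i j; first by rewrite eqxx mulr1 subrr.
  by rewrite suppx ?mulr0 ?subrr // in_setU1 negb_or ij.
have xj0 : x 0 j = 0.
  apply: contraNeq ej_notin => xj_neq0.
  have -> : delta_mx 0 j = (x 0 j)^-1 *: (- (x - x 0 j *: delta_mx 0 j) + x).
    by rewrite opprB subrK scalerA mulVf ?scale1r.
  by rewrite scalemx_sub // addmx_sub_adds // eqmx_opp.
by apply: capS0; rewrite sub_capmx x_ker andbT -[x]subr0 -(scale0r (delta_mx 0 j)) -xj0.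
Qed.

Lemma Fq_rank_ker v : (Fq_rank phi v + \rank (Fq_ker v))%N = n.
Proof.
have indep_exists : (0 < #|Fq_indep phi v|)%N by apply/card_gt0P; exists set0; apply: Fq_indep0.
have [S indS rank_S] := eq_bigmax_cond (fun S => #|S|) indep_exists.
have rank_indep S' : Fq_indep phi v S' ->
    (#|S'| + \rank (Fq_ker v))%N = \rank (coord_mx S' + Fq_ker v)%MS.
  by rewrite Fq_indepE => /eqP/mxrank_disjoint_sum ->; rewrite mxrank_coord_mx.
rewrite /Fq_rank rank_S; apply/eqP; rewrite eqn_leq {1}rank_indep // rank_leq_col /=.
rewrite leqNgt; apply/negP => lt_n.
have [j ej_notin] : exists j, ~~ ((delta_mx 0 j : 'rV[K]_n) <= coord_mx S + Fq_ker v)%MS.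
  apply/existsP; apply: contraLR lt_n => /existsPn sub_all; rewrite -leqNgt rank_indep //.
  rewrite -[X in (X <= _)%N](mxrank1 K n) mxrankS //; apply/row_subP => i.
  by rewrite row1; apply/negPn/sub_all.
have jS : j \notin S.
  by apply: contra ej_notin => jS; rewrite (submx_trans (coord_mx_delta jS)) ?addsmxSl.
have := @leq_bigmax_cond _ (Fq_indep phi v) (fun S => #|S|) _ (Fq_indepU1 indS ej_notin).
by rewrite rank_S cardsU1 jS ltnn.
Qed.

End FqRank.

Section MRDFaithful.
Variables (K : finFieldType) (F : fieldType) (phi : {rmorphism K -> F}) (k n : nat).
Variable G : 'M[F]_(k, n).

Lemma spanV_mul_tr_eq0 m (X : 'M[K]_(m, n)) (u : 'rV[F]_k) :
  (spanV phi G X *m u^T == 0) = (X <= Fq_ker phi (u *m G))%MS.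
Proof.
have entry r : (spanV phi G X *m u^T) r 0 = Fq_eval phi (u *m G) (row r X).
  by rewrite /spanV -mulmxA -(trmx_mul u G) mxE; apply: eq_bigr => j _; rewrite !mxE.
apply/eqP/row_subP => [/matrixP X_u0 r | X_ker].
  by rewrite sub_Fq_ker -entry X_u0 mxE.
by apply/matrixP => r c; rewrite ord1 entry mxE; apply/eqP; rewrite -sub_Fq_ker X_ker.
Qed.

Lemma MRD_spanV_faithful : row_free G -> MRD phi G <-> spanV_faithful phi G.
Proof.
move=> freeG; have le_kn : (k <= n)%N by rewrite -(eqP freeG) rank_leq_col.
split=> [mrdG | faithG u uG_neq0].
  apply: spanV_faithful_full => // B rB; apply/eqP; apply: contraT => not_full.
  have /rowV0Pn[u /sub_kermxP uT0 u_neq0] : kermx (spanV phi G B)^T != 0.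
    by rewrite kermx_eq0 /row_free mxrank_tr.
  have : (B <= Fq_ker phi (u *m G))%MS.
    by rewrite -spanV_mul_tr_eq0 -[_ *m _]trmxK trmx_mul trmxK uT0 trmx0.
  move/mxrankS; rewrite rB => rker.
  have := mrdG u; rewrite mulmx_free_eq0 // u_neq0 => /(_ isT).
  have := Fq_rank_ker phi (u *m G); lia.
rewrite leqNgt; apply/negP => lt_rank.
have [X sX rX] : exists2 X : 'M[K]_(k, n), (X <= Fq_ker phi (u *m G))%MS & \rank X = k.
  by apply: exists_submx_rank; have := Fq_rank_ker phi (u *m G); lia.
have unitT : spanV phi G X \in unitmx by rewrite -row_free_unit /row_free faithG ?rX.
move: sX; rewrite -spanV_mul_tr_eq0 => /eqP/(congr1 (mulmx (invmx (spanV phi G X)))).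
rewrite mulKmx // mulmx0 => /(congr1 trmx); rewrite trmxK trmx0 => u0.
by rewrite u0 mul0mx eqxx in uG_neq0.
Qed.

End MRDFaithful.

Section FracLift.
Local Open Scope quotient_scope.
Variables (R : idomainType) (L : fieldType) (f : {rmorphism R -> L}).
Hypothesis f_inj : injective f.

Definition frac_lift (x : {fraction R}) : L := f \n_(repr x) / f \d_(repr x).

Lemma tofrac_divE (r : {ratio R}) : \pi_{fraction R} r = tofrac \n_r / tofrac \d_r.
Proof.
have d_neq0 : tofrac \d_r != 0 :> {fraction R} by rewrite tofrac_eq0 denom_ratioP.
apply: (canRL (mulfK d_neq0)); unlock tofrac; rewrite -[LHS]FracField.pi_mul.
apply/eqmodP; rewrite /= FracField.equivfE /FracField.mulf.
by rewrite !numden_Ratio ?mulf_neq0 ?oner_neq0 ?denom_ratioP // !mulr1 mulrC.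
Qed.

Lemma fracP (x : {fraction R}) : exists a b, b != 0 /\ x = tofrac a / tofrac b.
Proof. by exists \n_(repr x), \d_(repr x); rewrite denom_ratioP -tofrac_divE reprK. Qed.

Let f_neq0 b : b != 0 -> f b != 0. Proof. by rewrite raddf_eq0. Qed.

Lemma frac_liftE a b : b != 0 -> frac_lift (tofrac a / tofrac b) = f a / f b.
Proof.
move=> b_neq0; rewrite /frac_lift; set x := tofrac a / tofrac b.
have d_neq0 : \d_(repr x) != 0 := denom_ratioP _.
have cross : a * \d_(repr x) = \n_(repr x) * b.
  apply/eqP; rewrite -tofrac_eq !rmorphM /= -eqr_div ?tofrac_eq0 //.
  by rewrite -tofrac_divE reprK.
by apply/eqP; rewrite eqr_div ?f_neq0 // -!rmorphM cross mulrC.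
Qed.

Lemma frac_lift_tofrac a : frac_lift (tofrac a) = f a.
Proof. by rewrite -[tofrac a]divr1 -tofrac1 frac_liftE ?oner_neq0 // rmorph1 divr1. Qed.

Fact frac_lift_is_zmod_morphism : zmod_morphism frac_lift.
Proof.
move=> x y; have [a [b [b_neq0 ->]]] := fracP x; have [c [d [d_neq0 ->]]] := fracP y.
have bd_neq0 : b * d != 0 by rewrite mulf_neq0.
rewrite -[- (_ / _)]mulNr -tofracN addf_div ?tofrac_eq0 // -!tofracM -tofracD !frac_liftE //.
by rewrite -[- (_ / _)]mulNr -rmorphN addf_div ?f_neq0 // rmorphD !rmorphM.
Qed.

Fact frac_lift_is_monoid_morphism : monoid_morphism frac_lift.
Proof.
split; first by rewrite -tofrac1 frac_lift_tofrac rmorph1.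
move=> x y; have [a [b [b_neq0 ->]]] := fracP x; have [c [d [d_neq0 ->]]] := fracP y.
by rewrite mulf_div -!tofracM !frac_liftE ?mulf_neq0 // mulf_div !rmorphM.
Qed.

Definition frac_lift_rmorphism : {rmorphism {fraction R} -> L} :=
  HB.pack frac_lift
    (GRing.isZmodMorphism.Build _ _ frac_lift frac_lift_is_zmod_morphism)
    (GRing.isMonoidMorphism.Build _ _ frac_lift frac_lift_is_monoid_morphism).

End FracLift.

HB.instance Definition _ (K : finFieldType) (R : fieldType) (psi : {rmorphism K -> R}) k n :=
  GRing.RMorphism.copy (embZ psi k n) (@tofrac _ \o (@mpolyC (k * n) R) \o psi)%FUN.

Section GenericMatrix.
Variables (K : finFieldType) (k n : nat).

Lemma Wmat_faithful (R : fieldType) (psi : {rmorphism K -> R}) :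
  (k <= n)%N -> spanV_faithful (embZ psi k n) (Wmat R k n).
Proof.
move=> le_kn; apply: spanV_faithful_full => // B rB.
have /row_freeP[B' BB'] : row_free B by rewrite /row_free rB.
pose P := map_mx ((@mpolyC (k * n) R) \o psi) B *m
  (\matrix_(i < k, j < n) 'X_(mxvec_index i j))^T.
have -> : spanV (embZ psi k n) (Wmat R k n) B = map_mx (@tofrac _) P.
  rewrite /spanV /P map_mxM -map_trmx -map_mx_comp; congr (_ *m _^T).
  by apply/matrixP => i j; rewrite !mxE /=.
pose z : 'I_(k * n) -> R := fun ij => mxvec (map_mx psi B')^T 0 ij.
have evalP : map_mx (meval z) P = 1%:M.
  rewrite /P map_mxM -map_trmx -!map_mx_comp.
  have -> : map_mx (meval z) (\matrix_(i < k, j < n) 'X_(mxvec_index i j)) = (map_mx psi B')^T.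
    by apply/matrixP => i j; rewrite !mxE mevalXU /z mxvecE !mxE.
  rewrite (@eq_map_mx _ _ _ _ psi) => [|a]; last by rewrite /= mevalC.
  by rewrite trmxK -map_mxM BB' map_mx1.
apply/eqP; rewrite -[_ == k]/(row_free _) row_free_unit.
rewrite unitmxE unitfE det_map_mx tofrac_eq0; apply: contra_neq (@oner_neq0 R) => detP0.
by rewrite -(det1 R k) -evalP det_map_mx detP0 rmorph0.
Qed.

End GenericMatrix.

Section GenericTransfer.
Variables (K : finFieldType) (F : fieldType) (phi : {rmorphism K -> F}) (l k n : nat).

Lemma mxrank_capV_Wmat (V : 'I_l -> 'M[K]_n) :
  \rank (capV (@embZ K K id k n) (Wmat K k n) V) =
  \rank (capV (embZ phi k n) (Wmat F k n) V).
Proof.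
pose f : {rmorphism {mpoly K[k * n]} -> ratfun F k n} := (@tofrac _ \o map_mpoly phi)%FUN.
have f_inj : injective f.
  move=> p q /eqP; rewrite tofrac_eq => /eqP eq_pq; apply/mpolyP => m.
  by apply: (fmorph_inj phi); rewrite -!mcoeff_map_mpoly eq_pq.
pose mu := frac_lift_rmorphism f_inj.
(* [id] carries no ring morphism structure, its convertible copy [idfun] does. *)
change (@embZ K K id k n) with (@embZ K K idfun k n).
rewrite -(mxrank_capV_map (mu := mu) (g := embZ phi k n)) => [|a /=]; last first.
  by rewrite /mu /= (frac_lift_tofrac f_inj) /f /= map_mpolyC.
congr (\rank (capV _ _ V)); apply/matrixP => i j.
by rewrite !mxE /mu /= (frac_lift_tofrac f_inj) /f /= map_mpolyX.
Qed.

Lemma MRDl_spanV_faithful (G : 'M[F]_(k, n)) :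
  (0 < l)%N -> (k <= n)%N -> MRDl phi l G -> spanV_faithful phi G.
Proof.
move=> l_gt0 le_kn mrdl m A rA; pose i0 : 'I_l := Ordinal l_gt0.
have rAgen : (\rank <<A>>%MS <= k)%N by rewrite genmxE.
rewrite -(eqmx_spanV _ _ (genmxE A)) -(capV_const _ _ _ i0) mrdl //.
change (@embZ K K id k n) with (@embZ K K idfun k n).
by rewrite (capV_const _ _ _ i0) Wmat_faithful // genmxE.
Qed.

End GenericTransfer.

Theorem mainTheorem18 (K : finFieldType) (F : fieldType) (phi : {rmorphism K -> F})
  (l k n : nat) (G : 'M[F]_(k, n)) :
  (1 <= l)%N -> row_free G ->
  (MRDl phi l G <->
   (MRD phi G /\
    forall V : 'I_l -> 'M[K]_n, (forall i, (\rank (V i) <= k)%N) ->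
      ((capV phi G V == (0 : 'M_k))%MS =
       (capV (@embZ K F phi k n) (Wmat F k n) V == (0 : 'M_k))%MS))).
Proof.
move=> l_gt0 freeG; have le_kn : (k <= n)%N by rewrite -(eqP freeG) rank_leq_col.
split=> [mrdl | [mrdG vanish] V rV].
  split; first exact/(MRD_spanV_faithful phi freeG)/(MRDl_spanV_faithful l_gt0 le_kn mrdl).
  by move=> V rV; rewrite !eqmx0_rank mrdl // (mxrank_capV_Wmat phi).
rewrite (mxrank_capV_Wmat phi); apply: (capV_rank_eq (Ordinal l_gt0)) => //.
  exact/(MRD_spanV_faithful phi freeG).
exact: Wmat_faithful.
Qed.
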